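(* The functor $H\colon\mathrm{SPP}\to\mathrm{EEED}$ is well defined and gives an equivalence from $\mathrm{SPP}$ to the full subcategory $\{M\in\mathrm{EEED}:\eta=0\}$ of exact extended $\eta$-diagrams whose map $\eta$ is zero.
   Context: For an abelian group $U$, $U[2]=\{u:2u=0\}$, $U/2=U/2U$, and $\bar c=c+2C$. An extended $\eta$-diagram is a diagram of abelian groups $B\xrightarrow{\psi}A\xrightarrow{\eta}C\xrightarrow{\chi}B$ with $2\eta=0$, $\psi\chi=0$, $\chi\eta\psi=2\cdot1_B$; morphisms are triples $(f\colon A\to A',g\colon B\to B',h\colon C\to C')$ commuting with $\psi,\eta,\chi$. It is exact if the induced sequence $C/2\xrightarrow{\chi}B\xrightarrow{\psi}A[2]$ is short exact; $\mathrm{EEED}$ is the category of these. The category $\mathrm{SPP}$ has objects pairs $(A,C)$ of abelian groups; morphisms $(A_0,C_0)\to(A_1,C_1)$ are triples $(f,h,u)$ with $f\colon A_0\to A_1$, $h\colon C_0\to C_1$, $u\colon A_0[2]\to C_1/2$; identities are $(1,1,0)$ and the composite of $(f_0,h_0,u_0)$ followed by $(f_1,h_1,u_1)$ is $(f_1f_0,h_1h_0,h_1\circ u_0+u_1\circ f_0)$. The functor $H$ sends $(A,C)$ to the diagram $C/2\oplus A[2]\xrightarrow{\psi}A\xrightarrow{0}C\xrightarrow{\chi}C/2\oplus A[2]$ with $\psi(\bar c,a)=a$ and $\chi(c)=(\bar c,0)$, and sends $(f,h,u)$ to the morphism $(f,g,h)$ where $g(\bar c_0,a_0)=(\overline{h(c_0)}+u(a_0),f(a_0))$.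 *)

From HB Require Import structures.
From mathcomp Require Import all_boot all_order all_algebra.
From mathcomp Require Import boolp.
From mathcomp Require Import generic_quotient ring_quotient.
Import Quotient.
Set Implicit Arguments. Unset Strict Implicit. Unset Printing Implicit Defensive.
Import GRing.Theory.
Local Open Scope quotient_scope.
Local Open Scope ring_scope.

Definition twice (U : zmodType) : {pred U} :=
  fun x => `[< exists d : U, x = d *+ 2 >].
Arguments twice U : clear implicits.

Lemma twice_zmod_closed (U : zmodType) : zmod_closed (twice U).
Proof.
split.
  by apply/asboolP; exists 0; rewrite mul0rn.
move=> x y /asboolP[a ->] /asboolP[b ->]; apply/asboolP.
by exists (a - b); rewrite mulrnBl.
Qed.

HB.instance Definition _ (U : zmodType) :=
  GRing.isZmodClosed.Build U (twice U) (twice_zmod_closed U).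

Definition mod2 (U : zmodType) : zmodType := Quotient.quot (twice U).
Definition cls2 (U : zmodType) (c : U) : mod2 U := \pi_(mod2 U) c.

Definition tors2_pred (U : zmodType) : {pred U} := fun x => x *+ 2 == 0.
Arguments tors2_pred U : clear implicits.

Lemma tors2_zmod_closed (U : zmodType) : zmod_closed (tors2_pred U).
Proof.
split; first by rewrite /tors2_pred unfold_in /= mul0rn.
move=> x y; rewrite /tors2_pred !unfold_in /= => /eqP hx /eqP hy.
by rewrite mulrnBl hx hy subr0.
Qed.

HB.instance Definition _ (U : zmodType) :=
  GRing.isZmodClosed.Build U (tors2_pred U) (tors2_zmod_closed U).

Record tors2 (U : zmodType) := Tors2 { tval : U; _ : tval \in tors2_pred U }.

HB.instance Definition _ (U : zmodType) := [isSub for (@tval U)].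
HB.instance Definition _ (U : zmodType) := [Choice of tors2 U by <:].
HB.instance Definition _ (U : zmodType) :=
  [SubChoice_isSubZmodule of tors2 U by <:].

Record diag := Diag {
  dA : zmodType; dB : zmodType; dC : zmodType;
  dpsi : dB -> dA; deta : dA -> dC; dchi : dC -> dB }.
Arguments dpsi d _ : clear implicits.
Arguments deta d _ : clear implicits.
Arguments dchi d _ : clear implicits.

Definition is_eed (M : diag) : Prop :=
  [/\ zmod_morphism (dpsi M), zmod_morphism (deta M), zmod_morphism (dchi M)
    & [/\ (forall a, deta M a *+ 2 = 0),
           (forall c, dpsi M (dchi M c) = 0) &
           (forall b, dchi M (deta M (dpsi M b)) = b *+ 2)]].

(* Exactness: the induced sequence C/2 --chi--> B --psi--> A[2] is short
   exact, written out: the induced map on C/2 is injective, its image is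
   the kernel of the induced map to A[2], and the latter is surjective.   *)
Definition is_exact (M : diag) : Prop :=
  [/\ (forall c, dchi M c = 0 -> cls2 c = 0),
      (forall b, dpsi M b = 0 <-> exists c, b = dchi M c) &
      (forall a : tors2 (dA M), exists b, dpsi M b = tval a)].

Record dmor (M N : diag) := DMor {
  mf : dA M -> dA N; mg : dB M -> dB N; mh : dC M -> dC N }.
Arguments mf {M N} d _.
Arguments mg {M N} d _.
Arguments mh {M N} d _.

Definition is_dmor (M N : diag) (m : dmor M N) : Prop :=
  [/\ zmod_morphism (mf m), zmod_morphism (mg m), zmod_morphism (mh m)
    & [/\ (forall b, mf m (dpsi M b) = dpsi N (mg m b)),
           (forall a, mh m (deta M a) = deta N (mf m a)) &
           (forall c, mg m (dchi M c) = dchi N (mh m c))]].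

Definition dmor_id (M : diag) : dmor M M := DMor id id id.
Definition dmor_comp (M N P : diag) (m : dmor M N) (n : dmor N P) : dmor M P :=
  DMor (mf n \o mf m) (mg n \o mg m) (mh n \o mh m).
Definition dmor_eq (M N : diag) (m n : dmor M N) : Prop :=
  [/\ mf m =1 mf n, mg m =1 mg n & mh m =1 mh n].

Record sppObj := SPP { sA : zmodType; sC : zmodType }.

Record sppMor (X Y : sppObj) := SPPMor {
  sf : sA X -> sA Y; sh : sC X -> sC Y; su : tors2 (sA X) -> mod2 (sC Y) }.
Arguments sf {X Y} s _.
Arguments sh {X Y} s _.
Arguments su {X Y} s _.

Definition is_sppMor (X Y : sppObj) (m : sppMor X Y) : Prop :=
  [/\ zmod_morphism (sf m), zmod_morphism (sh m) & zmod_morphism (su m)].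

Definition map2 (U V : zmodType) (h : U -> V) (x : mod2 U) : mod2 V :=
  cls2 (h (repr x)).
(* map induced on U[2] by f : U -> V (correct when f is additive) *)
Definition mapt (U V : zmodType) (f : U -> V) (a : tors2 U) : tors2 V :=
  insubd 0 (f (tval a)).

Definition spp_id (X : sppObj) : sppMor X X := SPPMor id id (fun _ => 0).
Definition spp_comp (X Y Z : sppObj) (m : sppMor X Y) (n : sppMor Y Z) :
  sppMor X Z :=
  SPPMor (sf n \o sf m) (sh n \o sh m)
         (fun a => map2 (sh n) (su m a) + su n (mapt (sf m) a)).
Definition spp_eq (X Y : sppObj) (m n : sppMor X Y) : Prop :=
  [/\ sf m =1 sf n, sh m =1 sh n & su m =1 su n].

Definition HB_ (X : sppObj) : zmodType := (mod2 (sC X) * tors2 (sA X))%type.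

Definition Hobj (X : sppObj) : diag :=
  @Diag (sA X) (HB_ X) (sC X)
    (fun p => tval p.2) (fun _ => 0) (fun c => (cls2 c, 0)).

Definition Hmor (X Y : sppObj) (m : sppMor X Y) : dmor (Hobj X) (Hobj Y) :=
  @DMor (Hobj X) (Hobj Y) (sf m)
    (fun p => (map2 (sh m) p.1 + su m p.2, mapt (sf m) p.2)) (sh m).

(* H lands in the exact diagrams with eta = 0 and is a functor by direct
   computation.  It is fully faithful because a diagram morphism between
   images of H is determined by its values on the two summands C/2 and A[2]
   of the middle group.  For essential surjectivity, eta = 0 forces
   2b = chi (eta (psi b)) = 0, so C/2 -> B -> A[2] is a short exact sequence
   of elementary abelian 2-groups; it splits by Zorn's lemma, and a
   splitting identifies M with H(A, C). *)

From Pilot Require Import Defs.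
From HB Require Import structures.
From mathcomp Require Import all_boot all_order all_algebra.
From mathcomp Require Import boolp classical_sets.
From mathcomp Require Import generic_quotient ring_quotient.
Set Implicit Arguments. Unset Strict Implicit. Unset Printing Implicit Defensive.
Import GRing.Theory.
Local Open Scope ring_scope.
Local Open Scope classical_set_scope.

Local Notation tval := Defs.tval.

Section ZmodMorphism.
Variables (U V : zmodType) (f : U -> V).
Hypothesis fA : zmod_morphism f.

Lemma zmod_morphism0 : f 0 = 0.
Proof. by rewrite -(subrr 0) fA subrr. Qed.

Lemma zmod_morphismN x : f (- x) = - f x.
Proof. by rewrite -sub0r fA zmod_morphism0 sub0r. Qed.

Lemma zmod_morphismD x y : f (x + y) = f x + f y.
Proof. by rewrite -[y in LHS]opprK fA zmod_morphismN opprK. Qed.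

Lemma zmod_morphismMn x n : f (x *+ n) = f x *+ n.
Proof.
by elim: n => [|n IHn]; rewrite ?mulr0n ?zmod_morphism0 // !mulrS zmod_morphismD IHn.
Qed.

End ZmodMorphism.

Lemma zmod_morphism_comp (U V W : zmodType) (f : U -> V) (g : V -> W) :
  zmod_morphism f -> zmod_morphism g -> zmod_morphism (g \o f).
Proof. by move=> fA gA x y /=; rewrite fA gA. Qed.

Lemma oppr_double0 (U : zmodType) (x : U) : x *+ 2 = 0 -> - x = x.
Proof. by move=> x2; apply/eqP; rewrite eq_sym -subr_eq0 opprK -mulr2n x2. Qed.

Lemma subrACA (U : zmodType) (x y z t : U) : x - y - (z - t) = x - z - (y - t).
Proof. by rewrite !opprB (addrACA x (- y)) (addrACA x (- z)) (addrC (- z)). Qed.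

Section Mod2.
Variable U : zmodType.

Lemma cls2_additive : zmod_morphism (@cls2 U).
Proof. exact: pi_is_zmod_morphism. Qed.

Lemma cls2K (x : mod2 U) : cls2 (repr x) = x.
Proof. exact: reprK. Qed.

Lemma cls2_eqP (x y : U) : cls2 x = cls2 y <-> exists d : U, x - y = d *+ 2.
Proof.
rewrite /cls2; split; first by move/eqP; rewrite -Quotient.idealrBE => /asboolP.
by move=> x_y; apply/eqP; rewrite -Quotient.idealrBE; apply/asboolP.
Qed.

Lemma cls2_double (x : U) : cls2 (x *+ 2) = 0.
Proof.
by rewrite -(zmod_morphism0 cls2_additive); apply/cls2_eqP; exists x; rewrite subr0.
Qed.

Lemma mod2_double (x : mod2 U) : x *+ 2 = 0.
Proof. by rewrite -(cls2K x) -(zmod_morphismMn cls2_additive) cls2_double. Qed.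

Lemma tval_double (a : tors2 U) : tval a *+ 2 = 0.
Proof. by case: a => x /= /eqP. Qed.

Lemma tors2_double (a : tors2 U) : a *+ 2 = 0.
Proof. by apply: val_inj; rewrite /= -mulr2n tval_double. Qed.

Lemma tval_insubd (x : U) : x *+ 2 = 0 -> tval (insubd 0 x : tors2 U) = x.
Proof. by move=> x2; rewrite insubdK //; apply/eqP. Qed.

End Mod2.

(* An additive map into a group killed by 2 kills 2U, so it factors through
   U/2 along [repr]. *)
Section FactorMod2.
Variables (U W : zmodType) (h : U -> W).
Hypotheses (hA : zmod_morphism h) (W2 : forall w : W, w *+ 2 = 0).

Lemma factor2_cls2 u : h (repr (cls2 u)) = h u.
Proof.
have [d Ed] : exists d, repr (cls2 u) - u = d *+ 2 by apply/cls2_eqP; rewrite cls2K.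
by apply/eqP; rewrite -subr_eq0 -hA Ed (zmod_morphismMn hA) W2.
Qed.

Lemma factor2_additive : zmod_morphism (fun x : mod2 U => h (repr x)).
Proof.
move=> x y; rewrite -(cls2K x) -(cls2K y) -cls2_additive.
by rewrite !factor2_cls2 hA.
Qed.

Lemma factor2_inj :
  (forall u, h u = 0 -> cls2 u = 0) -> injective (fun x : mod2 U => h (repr x)).
Proof.
move=> h_ker x y hxy; apply/eqP; rewrite -subr_eq0 -(cls2K x) -(cls2K y).
by rewrite -cls2_additive h_ker // hA hxy subrr.
Qed.

End FactorMod2.

Lemma map2_cls2 (U V : zmodType) (h : U -> V) : zmod_morphism h ->
  forall u, map2 h (cls2 u) = cls2 (h u).
Proof.
move=> hA u.
exact: (factor2_cls2 (zmod_morphism_comp hA (@cls2_additive V)) (@mod2_double V)).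
Qed.

Lemma map2_additive (U V : zmodType) (h : U -> V) :
  zmod_morphism h -> zmod_morphism (map2 h).
Proof.
move=> hA.
exact: (factor2_additive (zmod_morphism_comp hA (@cls2_additive V)) (@mod2_double V)).
Qed.

Lemma map2_id (U : zmodType) (x : mod2 U) : map2 id x = x.
Proof. exact: cls2K. Qed.

Lemma map2_comp (U V W : zmodType) (h : U -> V) (g : V -> W) :
  zmod_morphism g -> forall x, map2 (g \o h) x = map2 g (map2 h x).
Proof. by move=> gA x; rewrite [map2 h x]/map2 (map2_cls2 gA). Qed.

Lemma mapt_val (U V : zmodType) (f : U -> V) : zmod_morphism f ->
  forall a, tval (mapt f a) = f (tval a).
Proof.
move=> fA a; apply: tval_insubd.
by rewrite -(zmod_morphismMn fA) tval_double (zmod_morphism0 fA).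
Qed.

Lemma mapt_additive (U V : zmodType) (f : U -> V) :
  zmod_morphism f -> zmod_morphism (mapt f).
Proof. by move=> fA a b; apply: val_inj; rewrite /= !mapt_val // fA. Qed.

Lemma mapt_id (U : zmodType) (a : tors2 U) : mapt id a = a.
Proof. by apply: val_inj; rewrite /= mapt_val. Qed.

Lemma mapt_comp (U V W : zmodType) (f : U -> V) (g : V -> W) :
  zmod_morphism f -> zmod_morphism g -> forall a, mapt (g \o f) a = mapt g (mapt f a).
Proof.
move=> fA gA a; apply: val_inj => /=.
by rewrite !mapt_val //; apply: zmod_morphism_comp.
Qed.

(** * The functor H *)

Lemma is_eed_Hobj (X : sppObj) : is_eed (Hobj X).
Proof.
split=> //.
- by move=> a b /=; rewrite subr0.
- by move=> c c'; apply: injective_projections; rewrite /= ?cls2_additive ?subr0.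
split=> //.
- by move=> a /=; rewrite mul0rn.
- by case=> x a /=; rewrite mulr2n; apply: injective_projections;
    rewrite /= -mulr2n ?mod2_double ?tors2_double ?(zmod_morphism0 (@cls2_additive _)).
Qed.

Lemma is_exact_Hobj (X : sppObj) : is_exact (Hobj X).
Proof.
split=> [c /(congr1 fst) //| [x a] /= | a]; last by exists (0, a).
split=> [a0 | [c [_ ->]] //].
by exists (repr x); rewrite cls2K; congr (_, _); apply: val_inj.
Qed.

Lemma is_dmor_Hmor (X Y : sppObj) (m : sppMor X Y) :
  is_sppMor m -> is_dmor (Hmor m).
Proof.
case=> fA hA uA; split=> //.
- move=> p q; apply: injective_projections => /=; last exact: mapt_additive.
  by rewrite (map2_additive hA) uA addrACA opprD.
split=> [b | a | c] /=.
- by rewrite mapt_val.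
- by rewrite (zmod_morphism0 hA).
- rewrite map2_cls2 // (zmod_morphism0 uA) addr0.
  by rewrite (zmod_morphism0 (mapt_additive fA)).
Qed.

Lemma Hmor_id (X : sppObj) : dmor_eq (Hmor (spp_id X)) (dmor_id (Hobj X)).
Proof. by split=> // -[x a] /=; rewrite map2_id addr0 mapt_id. Qed.

Lemma Hmor_comp (X Y Z : sppObj) (m : sppMor X Y) (n : sppMor Y Z) :
  is_sppMor m -> is_sppMor n ->
  dmor_eq (Hmor (spp_comp m n)) (dmor_comp (Hmor m) (Hmor n)).
Proof.
case=> fA hA _ [gA kA _]; split=> // -[x a] /=.
by rewrite map2_comp // (zmod_morphismD (map2_additive kA)) addrA mapt_comp.
Qed.

(* The [u]-component of a preimage is read off on the summand [A[2]] of
   [C/2 + A[2]]. *)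
Lemma Hmor_full (X Y : sppObj) (n : dmor (Hobj X) (Hobj Y)) :
  is_dmor n -> exists m : sppMor X Y, is_sppMor m /\ dmor_eq (Hmor m) n.
Proof.
case=> fA gA hA [n_psi _ n_chi].
exists (SPPMor (mf n) (mh n) (fun a => (mg n (0, a)).1)); split.
  split=> // a b /=.
  have -> : ((0 : mod2 (sC X)), a - b) = (0, a) - (0, b).
    by apply: injective_projections; rewrite /= ?subr0.
  by rewrite gA.
split=> // -[x a] /=.
have -> : (x, a) = (cls2 (repr x), 0) + (0, a).
  by apply: injective_projections; rewrite /= ?cls2K ?addr0 ?add0r.
rewrite (zmod_morphismD gA) n_chi; apply: injective_projections => //=.
by rewrite add0r; apply: val_inj; rewrite /= mapt_val //; apply: (n_psi (0, a)).
Qed.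

Lemma Hmor_faithful (X Y : sppObj) (m m' : sppMor X Y) :
  is_sppMor m -> is_sppMor m' -> dmor_eq (Hmor m) (Hmor m') -> spp_eq m m'.
Proof.
case=> _ hA _ [_ hA' _] [ef eg eh]; split=> // a.
have := congr1 fst (eg (0, a)) => /=.
by rewrite !(zmod_morphism0 (map2_additive _)) // !add0r.
Qed.

(** * Exact diagrams with eta = 0 split *)

Lemma bigcup_chain2 (T : Type) (F : set (set T)) (x y : T) :
  total_on F subset -> (\bigcup_(X in F) X) x -> (\bigcup_(X in F) X) y ->
  exists2 X, F X & X x /\ X y.
Proof.
move=> Ftot [X FX Xx] [Y FY Yy].
case: (Ftot X Y FX FY) => [XY | YX]; [exists Y | exists X] => //.
- by split=> //; apply: XY.
- by split=> //; apply: YX.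
Qed.

(* Every surjection of elementary abelian 2-groups splits; the section is a
   maximal partial section, found by Zorn's lemma on graphs. *)
Section ElementaryAbelianSplit.
Variables (B Q : zmodType) (p : B -> Q).
Hypotheses (pA : zmod_morphism p) (B2 : forall b : B, b *+ 2 = 0)
  (p_onto : forall q, exists b, p b = q).

Definition partial_section (G : set (Q * B)) : Prop :=
  [/\ forall q b b', G (q, b) -> G (q, b') -> b = b',
      forall q b q' b', G (q, b) -> G (q', b') -> G (q - q', b - b')
    & forall q b, G (q, b) -> p b = q].

Lemma partial_section_bigcup (F : set (set (Q * B))) :
  F `<=` partial_section -> total_on F subset ->
  partial_section (\bigcup_(G in F) G).
Proof.
move=> Fsec Ftot; split.
- move=> q b b' /(bigcup_chain2 Ftot) /[apply] -[G FG [Gb Gb']].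
  by have [fun_G _ _] := Fsec G FG; apply: fun_G Gb Gb'.
- move=> q b q' b' /(bigcup_chain2 Ftot) /[apply] -[G FG [Gb Gb']].
  by have [_ sub_G _] := Fsec G FG; exists G => //; apply: sub_G.
- by move=> q b [G FG Gb]; have [_ _ p_G] := Fsec G FG; apply: p_G Gb.
Qed.

Lemma partial_section_origin : partial_section [set (0, 0)].
Proof.
split; first by move=> q b b' [_ ->] [_ ->].
  by move=> q b q' b' [-> ->] [-> ->]; rewrite /= !subr0.
by move=> q b [-> ->]; apply: zmod_morphism0.
Qed.

Lemma partial_section_extend (G : set (Q * B)) q0 b0 :
  partial_section G -> G (0, 0) -> p b0 = q0 -> ~ (exists b, G (q0, b)) ->
  partial_section (G `|` [set (z.1 + q0, z.2 + b0) | z in G]).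
Proof.
case=> fun_G sub_G p_G G00 pb0 q0_new.
have q0_2 : q0 *+ 2 = 0 by rewrite -pb0 -(zmod_morphismMn pA) B2 (zmod_morphism0 pA).
have new_G q b q' b' : G (q, b) -> G (q', b') -> q - q' = q0 -> False.
  by move=> Gb Gb' qq'; apply: q0_new; exists (b - b'); rewrite -qq'; apply: sub_G.
split.
- move=> q b b' [Gb|[[q1 b1] Gb1 [qE bE]]] [Gb'|[[q2 b2] Gb2 [qE' bE']]] /=.
  + exact: fun_G Gb Gb'.
  + by case: (new_G _ _ _ _ Gb Gb2); rewrite -qE' addrC addKr.
  + by case: (new_G _ _ _ _ Gb' Gb1); rewrite -qE addrC addKr.
  + move: qE'; rewrite -{}qE -{}bE -{}bE' /= => /addIr q12.
    by rewrite (fun_G q1 b1 b2) // -q12.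
- move=> q b q' b' [Gb|[[q1 b1] Gb1 [<- <-]]] [Gb'|[[q2 b2] Gb2 [<- <-]]] /=.
  + by left; apply: sub_G.
  + right; exists (q - q2, b - b2); first exact: sub_G.
    by rewrite /= !opprD (oppr_double0 q0_2) (oppr_double0 (B2 b0)) !addrA.
  + right; exists (q1 - q', b1 - b'); first exact: sub_G.
    by rewrite /= (addrAC q1) (addrAC b1).
  + by left; rewrite (addrC q2) (addrC b2) !addrKA; apply: sub_G.
- move=> q b [/p_G //|[[q1 b1] Gb1 [<- <-]]] /=.
  by rewrite (zmod_morphismD pA) pb0 (p_G _ _ Gb1).
Qed.

Lemma elementary_abelian2_split :
  exists s : Q -> B, zmod_morphism s /\ cancel s p.
Proof.
have [G [G_sec G_max]] := Zorn_bigcup partial_section_bigcup.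
have [fun_G sub_G p_G] := G_sec.
have maxG H z : G `<=` H -> partial_section H -> H z -> G z.
  move=> GH H_sec Hz; apply: contrapT => Gz.
  by apply: G_max H_sec; split=> // HG; apply/Gz/HG.
have G00 : G (0, 0).
  have [[[q b] Gb] | G_empty] := pselect (exists z, G z).
    by rewrite -(subrr q) -(subrr b); exact: (sub_G _ _ _ _ Gb Gb).
  apply: maxG partial_section_origin _ => // z Gz.
  by case: G_empty; exists z.
have G_total q : exists b, G (q, b).
  apply: contrapT => q_new; have [b0 pb0] := p_onto q.
  have ext_sec := partial_section_extend G_sec G00 pb0 q_new.
  apply: q_new; exists b0; apply: maxG ext_sec _; first exact: subsetUl.
  by right; exists (0, 0); rewrite //= !add0r.
have [s Gs] := choice G_total.
exists s; split=> [q q' | q]; last exact: p_G (Gs q).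
exact: fun_G (Gs _) (sub_G _ _ _ _ (Gs q) (Gs q')).
Qed.

End ElementaryAbelianSplit.

Section SplitExact.
Variables (K B Q : zmodType) (k : K -> B) (p : B -> Q) (s : Q -> B).
Hypotheses (kA : zmod_morphism k) (pA : zmod_morphism p) (sA : zmod_morphism s)
  (k_inj : injective k) (ker_p : forall b, p b = 0 <-> exists x, b = k x)
  (sK : cancel s p).

Lemma split_exact_retraction : exists r : B -> K,
  [/\ zmod_morphism r, cancel k r, forall q, r (s q) = 0
    & forall b, k (r b) + s (p b) = b].
Proof.
have : forall b, exists x, b - s (p b) = k x.
  by move=> b; apply/ker_p; rewrite pA sK subrr.
case/choice=> r rE; exists r.
have rK b : k (r b) + s (p b) = b by rewrite -rE subrK.
have kp x : p (k x) = 0 by apply/ker_p; exists x.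
split=> // [b b' | x | q].
- by apply: k_inj; rewrite kA -!rE !pA !sA subrACA.
- by apply: k_inj; rewrite -rE kp (zmod_morphism0 sA) subr0.
- by apply: k_inj; rewrite -rE sK subrr (zmod_morphism0 kA).
Qed.

End SplitExact.

Lemma eed_eta0_double (M : diag) :
  is_eed M -> (forall a, deta M a = 0) -> forall b : dB M, b *+ 2 = 0.
Proof.
case=> _ _ chiA [_ _ chi_eta_psi] eta0 b.
by rewrite -chi_eta_psi eta0 (zmod_morphism0 chiA).
Qed.

Section EtaZero.
Variable M : diag.
Hypotheses (psiA : zmod_morphism (dpsi M)) (chiA : zmod_morphism (dchi M))
  (eta0 : forall a, deta M a = 0) (B2 : forall b : dB M, b *+ 2 = 0)
  (M_exact : is_exact M).

Definition chi_mod2 (x : mod2 (dC M)) : dB M := dchi M (repr x).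
Definition psi_tors2 (b : dB M) : tors2 (dA M) := insubd 0 (dpsi M b).

Lemma chi_mod2_cls2 c : chi_mod2 (cls2 c) = dchi M c.
Proof. exact: factor2_cls2. Qed.

Lemma chi_mod2_additive : zmod_morphism chi_mod2.
Proof. exact: factor2_additive. Qed.

Lemma psi_tors2E b : tval (psi_tors2 b) = dpsi M b.
Proof.
by apply: tval_insubd; rewrite -(zmod_morphismMn psiA) B2 (zmod_morphism0 psiA).
Qed.

Lemma psi_tors2_additive : zmod_morphism psi_tors2.
Proof. by move=> b b'; apply: val_inj; rewrite /= !psi_tors2E psiA. Qed.

Lemma psi_tors2_eq0 b : psi_tors2 b = 0 <-> exists x, b = chi_mod2 x.
Proof.
have [_ ker_psi _] := M_exact.
have -> : (psi_tors2 b = 0) <-> (dpsi M b = 0).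
  split=> [/(congr1 val) | psib0]; first by rewrite /= psi_tors2E.
  by apply: val_inj; rewrite /= psi_tors2E.
rewrite ker_psi; split=> -[c ->]; last by exists (repr c).
by exists (cls2 c); rewrite chi_mod2_cls2.
Qed.

Lemma psi_tors2_chi_mod2 x : psi_tors2 (chi_mod2 x) = 0.
Proof. by apply/psi_tors2_eq0; exists x. Qed.

Lemma eta0_decomposition :
  exists (r : dB M -> mod2 (dC M)) (s : tors2 (dA M) -> dB M),
  [/\ zmod_morphism r, zmod_morphism s, cancel s psi_tors2, cancel chi_mod2 r
    & (forall a, r (s a) = 0) /\ (forall b, chi_mod2 (r b) + s (psi_tors2 b) = b)].
Proof.
have [chi_inj _ psi_onto] := M_exact.
have [s [sA sK]] : exists s, zmod_morphism s /\ cancel s psi_tors2.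
  apply: elementary_abelian2_split psi_tors2_additive B2 _ => a.
  by have [b psib] := psi_onto a; exists b; apply: val_inj; rewrite /= psi_tors2E.
have [r [rA rK rs0 rsplit]] := split_exact_retraction chi_mod2_additive
  psi_tors2_additive sA (factor2_inj chiA chi_inj) psi_tors2_eq0 sK.
by exists r, s.
Qed.

Lemma eta0_iso_Hobj :
  exists (X : sppObj) (i : dmor M (Hobj X)) (j : dmor (Hobj X) M),
    [/\ is_dmor i, is_dmor j,
        dmor_eq (dmor_comp i j) (dmor_id M) &
        dmor_eq (dmor_comp j i) (dmor_id (Hobj X))].
Proof.
have [r [s [rA sA sK rK [rs0 rsplit]]]] := eta0_decomposition.
have psiA2 := psi_tors2_additive; have psiD := zmod_morphismD psiA2.
pose X := SPP (dA M) (dC M).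
exists X, (@DMor M (Hobj X) id (fun b => (r b, psi_tors2 b)) id).
exists (@DMor (Hobj X) M id (fun x => chi_mod2 x.1 + s x.2) id).
split.
- split=> //; first by move=> b b' /=; rewrite rA psiA2.
  split=> [b | a | c] /=; first by rewrite psi_tors2E.
  + by rewrite eta0.
  + by rewrite -chi_mod2_cls2 rK psi_tors2_chi_mod2.
- split=> //.
  + move=> [x a] [y a'] /=; rewrite sA chi_mod2_additive.
    by rewrite opprD addrACA.
  split=> [[x a] | a | c] /=.
  + by rewrite -psi_tors2E psiD psi_tors2_chi_mod2 add0r sK.
  + by rewrite eta0.
  + by rewrite (zmod_morphism0 sA) addr0 chi_mod2_cls2.
- by split=> // b /=; apply: rsplit.
- split=> // -[x a] /=.
  by rewrite (zmod_morphismD rA) psiD rK rs0 psi_tors2_chi_mod2 sK addr0 add0r.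
Qed.

End EtaZero.

Lemma Hobj_essentially_surjective (M : diag) :
  is_eed M -> is_exact M -> (forall a, deta M a = 0) ->
  exists (X : sppObj) (i : dmor M (Hobj X)) (j : dmor (Hobj X) M),
    [/\ is_dmor i, is_dmor j,
        dmor_eq (dmor_comp i j) (dmor_id M) &
        dmor_eq (dmor_comp j i) (dmor_id (Hobj X))].
Proof.
move=> M_eed M_exact eta0; have [psiA _ chiA _] := M_eed.
exact: eta0_iso_Hobj psiA chiA eta0 (eed_eta0_double M_eed eta0) M_exact.
Qed.

Theorem proposition3p17 :
  (forall X : sppObj,
      is_eed (Hobj X) /\ is_exact (Hobj X) /\ (forall a, deta (Hobj X) a = 0)) /\
  (forall (X Y : sppObj) (m : sppMor X Y), is_sppMor m -> is_dmor (Hmor m)) /\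
  (forall X : sppObj, dmor_eq (Hmor (spp_id X)) (dmor_id (Hobj X))) /\
  (forall (X Y Z : sppObj) (m : sppMor X Y) (n : sppMor Y Z),
      is_sppMor m -> is_sppMor n ->
      dmor_eq (Hmor (spp_comp m n)) (dmor_comp (Hmor m) (Hmor n))) /\
  (forall (X Y : sppObj) (n : dmor (Hobj X) (Hobj Y)),
      is_dmor n -> exists m : sppMor X Y, is_sppMor m /\ dmor_eq (Hmor m) n) /\
  (forall (X Y : sppObj) (m m' : sppMor X Y),
      is_sppMor m -> is_sppMor m' -> dmor_eq (Hmor m) (Hmor m') -> spp_eq m m') /\
  (forall M : diag,
      is_eed M -> is_exact M -> (forall a, deta M a = 0) ->
      exists (X : sppObj) (i : dmor M (Hobj X)) (j : dmor (Hobj X) M),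
        [/\ is_dmor i, is_dmor j,
            dmor_eq (dmor_comp i j) (dmor_id M) &
            dmor_eq (dmor_comp j i) (dmor_id (Hobj X))]).
Proof.
split.
  by move=> X; split; [exact: is_eed_Hobj | split; [exact: is_exact_Hobj | by []]].
split; first exact: is_dmor_Hmor.
split; first exact: Hmor_id.
split; first exact: Hmor_comp.
split; first exact: Hmor_full.
split; first exact: Hmor_faithful.
exact: Hobj_essentially_surjective.
Qed.
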